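(* Let $\mathcal{A}\subset\mathbb{R}^n$ be a nonempty compact set, $\Xi\subseteq\mathbb{R}^n$, $V:\mathbb{R}^n\to\mathbb{R}_+$ and $\Psi:\mathbb{R}^n\rightrightarrows\mathbb{R}^n$, and assume one of the following two settings holds: (i) $\Xi$ is nonempty, closed and convex, $\mathcal{A}$ is convex, and $V(y)=\tfrac12\|y-\mathbf{P}_{\mathcal{A}}(y)\|^2$; (ii) $\Xi=\mathbb{R}^n$ and $V$ is continuously differentiable with locally Lipschitz gradient, positive definite and radially unbounded with respect to $\mathcal{A}$. Assume $\Psi$ is SPSP with respect to $V$ on $\Xi$, and that there exists $\beta>0$ such that for all $y\in\Xi$ and all $s\in\Psi(y)$, $$\|s\|^2\le \beta\,\nabla V(y)^T s .$$ Then $\mathcal{A}$ is SPAS for the iterative method $y^+=\mathbf{P}_\Xi[y-\alpha s]$, $s\in\Psi(y)$, with parameter $\alpha>0$.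
   Context: $\|\cdot\|$ is Euclidean; $\mathbf{P}_S$ is the orthogonal projection onto a nonempty closed convex set $S$. For compact $S$ and $r>0$: $\bar B_r(S)=\{x:\|x-\mathbf{P}_S(x)\|\le r\}$, $B_r(S)=\{x:\|x-\mathbf{P}_S(x)\|<r\}$ (distance to $S$). A function $V$ is positive definite w.r.t. a closed set $S$ if $V=0$ on $S$ and $V>0$ off $S$; it is radially unbounded w.r.t. $S$ (on a set $\Xi$) if for every $B\in\mathbb{R}$ there is $r>0$ with $V(x)>B$ for all $x$ (in $\Xi$) outside $\bar B_r(S)$. SPSP: Let $V:\mathbb{R}^n\to\mathbb{R}_+$ be differentiable, positive definite and radially unbounded w.r.t. compact $\mathcal{A}$, and let $\Xi$ strictly contain $\mathcal{A}$ (every point of $\mathcal{A}$ has an open ball around it contained in $\Xi$). $\Psi$ is semiglobally, practically, strictly pseudogradient (SPSP) w.r.t. $V$ on $\Xi$ if there exist $\epsilon\ge0$, $b\ge0$ such that $\nabla V(y)^Ts\ge -b$ for all $y\in\Xi\cap\bar B_\epsilon(\mathcal{A})$, $s\in\Psi(y)$, and for every $\sigma>\epsilon$ there is a continuous $\phi_{\sigma,\epsilon}:\mathbb{R}^n\to\mathbb{R}$, positive on $\Xi\cap(\bar B_\sigma(\mathcal{A})\setminus B_\epsilon(\mathcal{A}))$ and radially unbounded w.r.t. $\mathcal{A}$ on $\Xi$, with $\nabla V(y)^Ts\ge\phi_{\sigma,\epsilon}(y)$ for all $y\in\Xi\cap(\bar B_\sigma(\mathcal{A})\setminus B_\epsilon(\mathcal{A}))$,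 $s\in\Psi(y)$. SPAS (for the iteration with parameter $\alpha$; statements below concern every sequence $(y(t))_{t\in\mathbb{N}}$ with $y(0)\in\Xi$, $y(t+1)=\mathbf{P}_\Xi[y(t)-\alpha s(t)]$, $s(t)\in\Psi(y(t))$): $\mathcal{A}$ is practically stable if for some $\check\rho_s>0$ and every $\rho_s>\check\rho_s$ there exist $\delta>0$ and a nonempty set $P_s\subset(0,\infty)$ such that whenever $\alpha\in P_s$ and $y(0)\in\bar B_\delta(\mathcal{A})\cap\Xi$, $y(t)\in\bar B_{\rho_s}(\mathcal{A})\cap\Xi$ for all $t$. A compact $S$ is uniformly attractive on compact $\Omega$ if for every $\varepsilon>0$ with $\bar B_\varepsilon(S)\cap\Xi\subset\Omega\cap\Xi$ there is $T\in\mathbb{N}$ such that $y(t)\in\bar B_\varepsilon(S)$ whenever $y(0)\in\Omega$ and $t\ge T$. $\mathcal{A}$ is semiglobally practically attractive if for some $\check\rho_a>0$ and all $\sigma>\rho_a>\check\rho_a$ there is a nonempty $P_a\subset(0,\infty)$ such that whenever $\alpha\in P_a$, $\bar B_{\rho_a}(\mathcal{A})$ is uniformly attractive on $\bar B_\sigma(\mathcal{A})$. $\mathcal{A}$ is SPAS (semiglobally practically asymptotically stable) if it is practically stable and semiglobally practically attractive. *)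

(* Vectors of R^n are row vectors 'rV[R]_n
   over an abstract R : realType; the Euclidean structure is defined explicitly. *)
From HB Require Import structures.
From mathcomp Require Import all_boot all_order all_algebra.
From mathcomp Require Import all_classical all_reals all_analysis.
Set Implicit Arguments. Unset Strict Implicit. Unset Printing Implicit Defensive.
Import Order.TTheory GRing.Theory Num.Theory.
Import numFieldNormedType.Exports.
Local Open Scope classical_set_scope.
Local Open Scope ring_scope.

Section Defs.
Variables (R : realType) (n : nat).
Local Notation vec := 'rV[R]_n.

Definition edot (x y : vec) : R := \sum_(i < n) x ord0 i * y ord0 i.
Definition enorm (x : vec) : R := Num.sqrt (edot x x).

Definition dist_to (S : set vec) (x : vec) : R :=
  inf [set enorm (x - a) | a in S].

Definition nbhd_cl (S : set vec) (r : R) : set vec := [set x | dist_to S x <= r].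
Definition nbhd_op (S : set vec) (r : R) : set vec := [set x | dist_to S x < r].

Definition is_proj (S : set vec) (x p : vec) : Prop :=
  S p /\ forall q, S q -> enorm (x - p) <= enorm (x - q).

Definition is_convex (S : set vec) : Prop :=
  forall x y (t : R), S x -> S y -> 0 <= t <= 1 -> S (t *: x + (1 - t) *: y).

Definition has_gradient (V : vec -> R) (g : vec -> vec) : Prop :=
  forall y (e : R), 0 < e -> exists2 d : R, 0 < d &
    forall h, enorm h < d -> `|V (y + h) - V y - edot (g y) h| <= e * enorm h.

Definition locally_lipschitz (g : vec -> vec) : Prop :=
  forall y, exists2 r : R, 0 < r & exists L : R,
    forall z1 z2, enorm (z1 - y) < r -> enorm (z2 - y) < r ->
      enorm (g z1 - g z2) <= L * enorm (z1 - z2).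

Definition pos_def_wrt (V : vec -> R) (S : set vec) : Prop :=
  (forall x, S x -> V x = 0) /\ (forall x, ~ S x -> 0 < V x).

Definition rad_unb_on (V : vec -> R) (S Xi : set vec) : Prop :=
  forall B : R, exists2 r : R, 0 < r &
    forall x, Xi x -> ~ nbhd_cl S r x -> B < V x.

Definition strictly_contains (Xi A : set vec) : Prop :=
  forall a, A a -> exists2 r : R, 0 < r & forall x, enorm (x - a) < r -> Xi x.

Definition SPSP (Psi : vec -> set vec) (g : vec -> vec) (A Xi : set vec) : Prop :=
  strictly_contains Xi A /\
  exists eps b : R, 0 <= eps /\ 0 <= b /\
    (forall y s, Xi y -> nbhd_cl A eps y -> Psi y s -> - b <= edot (g y) s) /\
    (forall sigma : R, eps < sigma ->
       exists phi : vec -> R, continuous phi /\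
         (forall y, Xi y -> nbhd_cl A sigma y -> ~ nbhd_op A eps y -> 0 < phi y) /\
         rad_unb_on phi A Xi /\
         (forall y s, Xi y -> nbhd_cl A sigma y -> ~ nbhd_op A eps y -> Psi y s ->
            phi y <= edot (g y) s)).

Definition trajectory (Xi : set vec) (Psi : vec -> set vec) (alpha : R)
    (y : nat -> vec) : Prop :=
  Xi (y 0%N) /\ exists s : nat -> vec, forall t,
    Psi (y t) (s t) /\ is_proj Xi (y t - alpha *: s t) (y t.+1).

Definition practically_stable (Xi : set vec) (Psi : vec -> set vec)
    (A : set vec) : Prop :=
  exists2 rho0 : R, 0 < rho0 & forall rho : R, rho0 < rho ->
    exists2 delta : R, 0 < delta & exists P : set R,
      P !=set0 /\ (forall a, P a -> 0 < a) /\
      forall alpha y, P alpha -> trajectory Xi Psi alpha y ->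
        nbhd_cl A delta (y 0%N) -> forall t, nbhd_cl A rho (y t) /\ Xi (y t).

Definition uniformly_attractive (Xi : set vec) (Psi : vec -> set vec)
    (alpha : R) (S Omega : set vec) : Prop :=
  forall e : R, 0 < e -> nbhd_cl S e `&` Xi `<=` Omega `&` Xi ->
    exists T : nat, forall y, trajectory Xi Psi alpha y -> Omega (y 0%N) ->
      forall t, (T <= t)%N -> nbhd_cl S e (y t).

Definition semiglobally_practically_attractive (Xi : set vec)
    (Psi : vec -> set vec) (A : set vec) : Prop :=
  exists2 rho0 : R, 0 < rho0 & forall sigma rho : R, rho0 < rho -> rho < sigma ->
    exists P : set R, P !=set0 /\ (forall a, P a -> 0 < a) /\
      forall alpha, P alpha ->
        uniformly_attractive Xi Psi alpha (nbhd_cl A rho) (nbhd_cl A sigma).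

Definition SPAS (Xi : set vec) (Psi : vec -> set vec) (A : set vec) : Prop :=
  practically_stable Xi Psi A /\ semiglobally_practically_attractive Xi Psi A.

End Defs.

From HB Require Import structures.
From mathcomp Require Import all_boot all_order all_algebra.
From mathcomp Require Import all_classical all_reals all_analysis.
From mathcomp Require Import ring lra.
Import Order.TTheory GRing.Theory Num.Theory.
Import numFieldNormedType.Exports.
Local Open Scope classical_set_scope.
Local Open Scope ring_scope.
Set Implicit Arguments. Unset Strict Implicit. Unset Printing Implicit Defensive.

(* Both settings give a sufficient-decrease property: for every level M there is
   a0 > 0 such that, for 0 < a <= a0, one step from a point y of the sublevel set
   {V <= M} satisfies V(y+) <= V(y) - a/2 <grad V(y), s>, while the pseudogradient
   bound |s|^2 <= beta <grad V(y), s> makes the decrease nonnegative.  In setting (i)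
   grad V(y) = y - P_A(y), so V(y - a s) <= V(y) - a <grad V(y), s> + a^2 |s|^2 / 2, and
   P_Xi does not increase the distance to A because A lies in the convex set Xi.  In
   setting (ii) the mean value theorem along [y, y - a s] and a Lipschitz bound for
   grad V on the compact set {V <= M} give the same estimate.
   Sublevel sets of V are thus forward invariant, which yields practical stability.
   On the compact part of {V <= M2} at distance >= eps + 1 from A the SPSP function
   is bounded below by some m > 0, so V drops by at least a m / 2 per step until it
   reaches a level M1 bounding V on the closed (eps + 1)-neighbourhood of A; the
   radial unboundedness of V turns both level bounds into distance bounds. *)

Section Euclidean.
Variables (R : realType) (n : nat).
Local Notation vec := 'rV[R]_n.
Implicit Types (x y z : vec) (a : R).

Lemma edotC x y : edot x y = edot y x.
Proof. by apply: eq_bigr => i _; rewrite mulrC. Qed.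

Lemma edotDl x y z : edot (x + y) z = edot x z + edot y z.
Proof. by rewrite /edot -big_split; apply: eq_bigr => i _; rewrite mxE mulrDl. Qed.

Lemma edotZl a x y : edot (a *: x) y = a * edot x y.
Proof. by rewrite /edot mulr_sumr; apply: eq_bigr => i _; rewrite mxE mulrA. Qed.

Lemma edotNl x y : edot (- x) y = - edot x y.
Proof. by rewrite -scaleN1r edotZl mulN1r. Qed.

Lemma edotBl x y z : edot (x - y) z = edot x z - edot y z.
Proof. by rewrite edotDl edotNl. Qed.

Lemma edotDr x y z : edot x (y + z) = edot x y + edot x z.
Proof. by rewrite edotC edotDl !(edotC x). Qed.

Lemma edotZr a x y : edot x (a *: y) = a * edot x y.
Proof. by rewrite edotC edotZl edotC. Qed.

Lemma edotNr x y : edot x (- y) = - edot x y.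
Proof. by rewrite edotC edotNl edotC. Qed.

Lemma edotBr x y z : edot x (y - z) = edot x y - edot x z.
Proof. by rewrite edotDr edotNr. Qed.

Lemma edot0l x : edot 0 x = 0.
Proof. by rewrite -(scale0r x) edotZl mul0r. Qed.

Lemma edotxx_ge0 x : 0 <= edot x x.
Proof. by apply: sumr_ge0 => i _; rewrite -expr2 sqr_ge0. Qed.

Lemma edotxx_eq0 x : edot x x = 0 -> x = 0.
Proof.
move/eqP; rewrite /edot psumr_eq0 => [/allP x0|i _]; last by rewrite -expr2 sqr_ge0.
apply/rowP => i; rewrite mxE.
by have := x0 i (mem_index_enum i); rewrite /= -expr2 sqrf_eq0 => /eqP.
Qed.

Lemma edot_sqrD x y : edot (x + y) (x + y) = edot x x + 2 * edot x y + edot y y.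
Proof. by rewrite !edotDl !edotDr (edotC y x); ring. Qed.

Lemma edot_sqrB a x y :
  edot (a *: x - y) (a *: x - y) = a ^+ 2 * edot x x - 2 * a * edot x y + edot y y.
Proof. by rewrite edotBl !edotBr !edotZl !edotZr (edotC y x); ring. Qed.

Lemma edot_sqr_le x y : edot x y ^+ 2 <= edot x x * edot y y.
Proof.
have [x0|xx_neq0] := eqVneq (edot x x) 0.
  by rewrite (edotxx_eq0 x0) !edot0l expr0n mul0r.
have xx_gt0 : 0 < edot x x by rewrite lt_def xx_neq0 edotxx_ge0.
(* the quadratic [a |-> |a x - y|^2] is nonnegative at its minimiser [a = <x,y>/<x,x>] *)
have := edotxx_ge0 ((edot x y / edot x x) *: x - y); rewrite edot_sqrB.
have -> : (edot x y / edot x x) ^+ 2 * edot x x - 2 * (edot x y / edot x x) * edot x y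
    = - (edot x y ^+ 2 / edot x x) by field; rewrite xx_neq0.
by rewrite addrC subr_ge0 ler_pdivrMr // mulrC.
Qed.

Lemma enorm_ge0 x : 0 <= enorm x.
Proof. exact: sqrtr_ge0. Qed.

Lemma enorm_sqr x : enorm x ^+ 2 = edot x x.
Proof. by rewrite sqr_sqrtr // edotxx_ge0. Qed.

Lemma enorm_eq0 x : enorm x = 0 -> x = 0.
Proof. by move=> x0; apply: edotxx_eq0; rewrite -enorm_sqr x0 expr0n. Qed.

Lemma enorm0 : enorm (0 : vec) = 0.
Proof. by rewrite /enorm edot0l sqrtr0. Qed.

Lemma enormZ a x : enorm (a *: x) = `|a| * enorm x.
Proof.
rewrite /enorm edotZl edotZr mulrA sqrtrM; last by rewrite -expr2 sqr_ge0.
by rewrite -expr2 sqrtr_sqr.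
Qed.

Lemma enormN x : enorm (- x) = enorm x.
Proof. by rewrite -scaleN1r enormZ normrN normr1 mul1r. Qed.

Lemma enormBC x y : enorm (x - y) = enorm (y - x).
Proof. by rewrite -enormN opprB. Qed.

Lemma normr_edot_le x y : `|edot x y| <= enorm x * enorm y.
Proof.
rewrite /enorm -sqrtrM ?edotxx_ge0 // -sqrtr_sqr.
exact/ler_wsqrtr/edot_sqr_le.
Qed.

Lemma edot_le_enorm x y : edot x y <= enorm x * enorm y.
Proof. exact: le_trans (ler_norm _) (normr_edot_le x y). Qed.

Lemma ler_enormD x y : enorm (x + y) <= enorm x + enorm y.
Proof.
rewrite -ler_sqr ?nnegrE ?addr_ge0 ?enorm_ge0 //.
rewrite enorm_sqr edot_sqrD sqrrD -!enorm_sqr lerD2r lerD2l.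
by rewrite mulr_natl !mulr2n lerD ?edot_le_enorm.
Qed.

Lemma enorm_triangle x y z : enorm (x - z) <= enorm (x - y) + enorm (y - z).
Proof. by have := ler_enormD (x - y) (y - z); rewrite addrA subrK. Qed.

Lemma ler_enorm_dist x y : `|enorm x - enorm y| <= enorm (x - y).
Proof.
have := enorm_triangle x y 0; have := enorm_triangle y x 0.
rewrite !subr0 (enormBC y x) ler_norml; lra.
Qed.

Lemma enorm_le_of_sqr_le_edot (v s : vec) (beta : R) :
  0 <= beta -> enorm s ^+ 2 <= beta * edot v s -> enorm s <= beta * enorm v.
Proof.
move=> beta_ge0 s_le.
have : beta * edot v s <= beta * enorm v * enorm s by rewrite -mulrA ler_wpM2l ?edot_le_enorm.
have := mulr_ge0 beta_ge0 (enorm_ge0 v); have := enorm_ge0 s.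
move: s_le; move: (enorm s) (beta * enorm v) => a B; nra.
Qed.

Lemma edot_ge0_of_enorm_sqr_le (v s : vec) (beta : R) :
  0 < beta -> enorm s ^+ 2 <= beta * edot v s -> 0 <= edot v s.
Proof.
by move=> beta_gt0 s_le; rewrite -(pmulr_rge0 _ beta_gt0); exact: le_trans (sqr_ge0 _) s_le.
Qed.

End Euclidean.

Section EuclideanTopology.
Variables (R : realType) (n : nat).
Local Notation vec := 'rV[R]_n.
Implicit Types (x y z : vec) (f : vec -> R).

Lemma coord_le_enorm x (i : 'I_n) : `|x ord0 i| <= enorm x.
Proof.
rewrite -sqrtr_sqr; apply: ler_wsqrtr.
rewrite /edot (bigD1 i) //= expr2 lerDl; apply: sumr_ge0 => j _.
by rewrite -expr2 sqr_ge0.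
Qed.

Lemma mx_norm_le_enorm x : `|x| <= enorm x.
Proof.
rewrite [leLHS]/Num.norm /= mx_normrE; apply: bigmax_le => [|[i j] _ /=].
  exact: enorm_ge0.
by rewrite (ord1 i); exact: coord_le_enorm.
Qed.

Lemma coord_le_mx_norm x (i : 'I_n) : `|x ord0 i| <= `|x|.
Proof.
rewrite [leRHS]/Num.norm /= mx_normrE.
exact: (le_bigmax _ (fun ij : 'I_1 * 'I_n => `|x ij.1 ij.2|) (ord0, i)).
Qed.

Lemma enorm_le_mx_norm x : enorm x <= n.+1%:R * `|x|.
Proof.
rewrite -ler_sqr ?nnegrE ?enorm_ge0 ?mulr_ge0 // enorm_sqr.
apply: (@le_trans _ _ (\sum_(i < n) `|x| ^+ 2)).
  apply: ler_sum => i _; rewrite -expr2 -real_normK ?num_real //.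
  by rewrite ler_pXn2r ?nnegrE // coord_le_mx_norm.
rewrite sumr_const card_ord exprMn -[_ *+ n]mulr_natl ler_wpM2r ?sqr_ge0 //.
by rewrite -natrX ler_nat expnS (leq_trans (leqnSn n)) // leq_pmulr // expn_gt0.
Qed.

Lemma nbhs_enorm_lt y (e : R) : 0 < e -> \forall z \near y, enorm (z - y) < e.
Proof.
move=> e_gt0; have := near_ball y (e / n.+1%:R) (divr_gt0 e_gt0 (ltr0Sn R n)).
apply: filterS => z; rewrite -ball_normE /ball_ /= distrC => yz.
by apply: le_lt_trans (enorm_le_mx_norm _) _; rewrite mulrC -ltr_pdivlMr.
Qed.

Lemma continuous_at_enorm f y :
  (forall e, 0 < e -> exists2 d, 0 < d & forall z, enorm (z - y) < d -> `|f z - f y| < e) ->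
  {for y, continuous f}.
Proof.
move=> fy; apply/(@cvgrPdist_lt _ _ _ (nbhs y) _ f (f y)) => e /fy[d d_gt0 fyd].
by near=> z; rewrite distrC; apply: fyd; near: z; exact: nbhs_enorm_lt.
Unshelve. all: by end_near.
Qed.

Lemma continuous_enormB x : continuous (fun z => enorm (z - x)).
Proof.
move=> y; apply: continuous_at_enorm => e e_gt0; exists e => // z zy.
by apply: le_lt_trans (ler_enorm_dist _ _) _; rewrite opprB addrA subrK.
Qed.

Lemma compact_enorm_bounded (S : set vec) (B : R) :
  closed S -> (forall x, S x -> enorm x <= B) -> compact S.
Proof.
move=> S_closed SB; apply: bounded_closed_compact => //.
change (\forall M \near +oo, globally S [set x | `|x| <= M]).
apply: filterS (nbhs_pinfty_ge (num_real B)) => M BM x Sx /=.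
exact: le_trans (mx_norm_le_enorm _) (le_trans (SB x Sx) BM).
Qed.

Lemma closed_sublevel f (c : R) : continuous f -> closed [set x | f x <= c].
Proof.
move=> f_cont; apply: (@preimage_closed _ _ f [set x | x <= c]); last exact: closed_le.
by move=> x _; exact: f_cont.
Qed.

Lemma closed_superlevel f (c : R) : continuous f -> closed [set x | c <= f x].
Proof.
move=> f_cont; apply: (@preimage_closed _ _ f [set x | c <= x]); last exact: closed_ge.
by move=> x _; exact: f_cont.
Qed.

Lemma compact_continuous_ub (K : set vec) f : compact K -> continuous f ->
  exists2 M, 0 <= M & forall x, K x -> f x <= M.
Proof.
move=> K_compact f_cont; have [[x0 Kx0]|K0] := pselect (K !=set0); last first.
  by exists 0 => // x Kx; case: K0; exists x.
have [m _ fm] := EVT_max_rV (ex_intro _ x0 Kx0) K_compact (continuous_subspaceT f_cont).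
exists (Num.max 0 (f m)) => [|x Kx]; first by rewrite le_max lexx.
by rewrite le_max fm ?orbT ?inE.
Qed.

Lemma compact_continuous_pos_lb (K : set vec) f : compact K -> continuous f ->
  (forall x, K x -> 0 < f x) -> exists2 m, 0 < m & forall x, K x -> m <= f x.
Proof.
move=> K_compact f_cont f_gt0; have [[x0 Kx0]|K0] := pselect (K !=set0); last first.
  by exists 1 => // x Kx; case: K0; exists x.
have [m Km fm] := EVT_min_rV (ex_intro _ x0 Kx0) K_compact (continuous_subspaceT f_cont).
rewrite inE in Km; exists (f m) => [|x Kx]; first exact: f_gt0.
by apply: fm; rewrite inE.
Qed.

End EuclideanTopology.

Section DistanceToSet.
Variables (R : realType) (n : nat) (S : set 'rV[R]_n).
Local Notation vec := 'rV[R]_n.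
Implicit Types (x y : vec) (r : R).

Lemma dist_to_le x a : S a -> dist_to S x <= enorm (x - a).
Proof.
move=> Sa; apply: ge_inf; last by exists a.
by exists 0 => _ [b _ <-]; exact: enorm_ge0.
Qed.

Lemma dist_to_mem x : S x -> dist_to S x <= 0.
Proof. by move/(dist_to_le x); rewrite subrr enorm0. Qed.

Hypothesis S_neq0 : S !=set0.

Lemma dist_to_ge x (m : R) : (forall a, S a -> m <= enorm (x - a)) -> m <= dist_to S x.
Proof.
move=> xm; apply: lb_le_inf => [|_ [a Sa <-]]; last exact: xm.
by have [a Sa] := S_neq0; exists (enorm (x - a)), a.
Qed.

Lemma dist_to_ge0 x : 0 <= dist_to S x.
Proof. by apply: dist_to_ge => a _; exact: enorm_ge0. Qed.

Lemma dist_to_lip x y : dist_to S x <= dist_to S y + enorm (x - y).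
Proof.
rewrite -lerBlDr; apply: dist_to_ge => a Sa; rewrite lerBlDr [leRHS]addrC.
exact: le_trans (dist_to_le x Sa) (enorm_triangle _ y _).
Qed.

Lemma continuous_dist_to : continuous (dist_to S).
Proof.
move=> y; apply: continuous_at_enorm => e e_gt0; exists e => // z zy.
have := dist_to_lip z y; have := dist_to_lip y z.
rewrite enormBC ltr_norml; lra.
Qed.

Lemma closed_nbhd_cl r : closed (nbhd_cl S r).
Proof. exact/closed_sublevel/continuous_dist_to. Qed.

Lemma dist_to_attained x : compact S -> exists2 p, S p & dist_to S x = enorm (x - p).
Proof.
move=> S_compact; have [p Sp pmin] := EVT_min_rV S_neq0 S_compact
  (continuous_subspaceT (@continuous_enormB R n x)).
rewrite inE in Sp; exists p => //; apply/le_anti; rewrite dist_to_le //=.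
by apply: dist_to_ge => a Sa; rewrite enormBC (enormBC x) pmin ?inE.
Qed.

Lemma compact_sub_nbhd_cl (K : set vec) r :
  compact S -> K `<=` nbhd_cl S r -> closed K -> compact K.
Proof.
move=> S_compact KS K_closed.
have [B _ SB] := compact_continuous_ub S_compact (@continuous_enormB R n 0).
apply: (@compact_enorm_bounded _ _ _ (r + B)) => // x /KS Sx.
have [p Sp xp] := dist_to_attained x S_compact; rewrite /nbhd_cl /= xp in Sx.
have := SB p Sp; have := ler_enormD (x - p) p; rewrite subrK subr0; lra.
Qed.

End DistanceToSet.

Section Gradient.
Variables (R : realType) (n : nat) (V : 'rV[R]_n -> R) (g : 'rV[R]_n -> 'rV[R]_n).
Hypothesis V_grad : has_gradient V g.

Lemma has_gradient_continuous : continuous V.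
Proof.
move=> y; apply: continuous_at_enorm => e e_gt0.
have [d d_gt0 Vy] := V_grad y ltr01.
have G_ge0 := enorm_ge0 (g y).
have eG_gt0 : 0 < e / (enorm (g y) + 2) by rewrite divr_gt0 //; lra.
exists (Num.min d (e / (enorm (g y) + 2))); first by rewrite lt_min d_gt0 eG_gt0.
move=> z; rewrite lt_min => /andP[zd /ltW ze].
have := Vy (z - y) zd; have -> : y + (z - y) = z by rewrite addrC subrK.
have := normr_edot_le (g y) (z - y); have := enorm_ge0 (z - y).
move: ze; rewrite ler_pdivlMr; last lra.
move: (V z - V y) (edot (g y) (z - y)) (enorm (z - y)) => dV dg h ze h_ge0 dg_le dV_le.
have := ler_normD (dV - dg) dg; rewrite subrK; nra.
Qed.

Lemma gradient_eq_of_upper_quadratic z w (C : R) :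
  (forall h, V (z + h) <= V z + edot w h + C * enorm h ^+ 2) -> g z = w.
Proof.
move=> V_le; apply/subr0_eq/enorm_eq0/eqP; set u := g z - w; set N := enorm u.
rewrite eq_le enorm_ge0 andbT leNgt; apply/negP => N_gt0.
have [d d_gt0 Vz] := V_grad z (divr_gt0 N_gt0 (ltr0Sn R 3)).
have C1_gt0 : 0 < `|C| + 1 by rewrite ltr_wpDl.
set t := Num.min (d / (2 * N)) (2^-1 / (`|C| + 1)).
have t_gt0 : 0 < t by rewrite lt_min !divr_gt0 ?mulr_gt0.
have tN_lt : t * N < d.
  have : t <= d / (2 * N) by rewrite ge_min lexx.
  rewrite ler_pdivlMr ?mulr_gt0 //; lra.
have Ct_le : C * t <= 2^-1.
  have : t <= 2^-1 / (`|C| + 1) by rewrite ge_min lexx orbT.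
  rewrite ler_pdivlMr // => tC; have := ler_norm C; nra.
have := Vz (t *: u); rewrite !enormZ gtr0_norm // edotZr => /(_ tN_lt).
rewrite ler_norml => /andP[Vz_lb _].
have := V_le (t *: u); rewrite enormZ gtr0_norm // edotZr => Vz_ub.
have uu : edot (g z) u - edot w u = N ^+ 2 by rewrite -edotBl enorm_sqr.
(* comparing both bounds along [t u] gives [t N^2 <= t N^2 / 4 + (C t) t N^2] *)
have P_gt0 : 0 < t * N ^+ 2 by rewrite mulr_gt0 // exprn_gt0.
have CtP : C * t * (t * N ^+ 2) <= 2^-1 * (t * N ^+ 2) by rewrite ler_pM2r.
have tuu : t * edot (g z) u - t * edot w u = t * N ^+ 2 by rewrite -mulrBr uu.
move: Vz_lb Vz_ub; rewrite (_ : C * (t * N) ^+ 2 = C * t * (t * N ^+ 2)); last by ring.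
rewrite (_ : N / 4 * (t * N) = t * N ^+ 2 / 4); last by ring.
move: CtP tuu P_gt0.
move: (V (z + t *: u)) (t * edot (g z) u) (t * edot w u) (C * t * (t * N ^+ 2)) => Vzu gu wu Q.
move: (t * N ^+ 2) => P; lra.
Qed.

Lemma line_difference_quotient p w (e : R) : 0 < e ->
  exists2 d, 0 < d & forall h : R, h != 0 -> `|h| < d ->
    `|h^-1 * (V (p + h *: w) - V p) - edot (g p) w| <= e * enorm w.
Proof.
move=> e_gt0; have [d d_gt0 Vp] := V_grad p e_gt0.
have w1_gt0 : 0 < enorm w + 1 by rewrite ltr_wpDl ?enorm_ge0.
exists (d / (enorm w + 1)); first by rewrite divr_gt0.
move=> h h_neq0; rewrite ltr_pdivlMr // => hd.
have hw : enorm (h *: w) < d.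
  by rewrite enormZ; apply: le_lt_trans hd; rewrite ler_wpM2l ?lerDl.
have -> : h^-1 * (V (p + h *: w) - V p) - edot (g p) w
    = h^-1 * (V (p + h *: w) - V p - edot (g p) (h *: w)).
  by rewrite edotZr !mulrBr mulrA mulVf ?mul1r.
rewrite normrM normfV ler_pdivrMl ?normr_gt0 //.
by have := Vp _ hw; rewrite enormZ mulrCA.
Qed.

Lemma is_derive_line y w (c : R) :
  is_derive c 1 (fun t => V (y + t *: w)) (edot (g (y + c *: w)) w).
Proof.
set p := y + c *: w; set l := edot (g p) w.
have w1_gt0 : 0 < enorm w + 1 by rewrite ltr_wpDl ?enorm_ge0.
have dq : (fun h : R => h^-1 *: (V (y + (h *: (1 : R) + c) *: w) - V p)) @ 0^' --> l.
  apply/cvgrPdist_lt => e e_gt0.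
  have [d d_gt0 pd] := line_difference_quotient p w (divr_gt0 e_gt0 w1_gt0).
  near=> h; rewrite distrC.
  have -> : y + (h *: (1 : R) + c) *: w = p + h *: w.
    by apply/rowP => i; rewrite /p !mxE [h *: 1]mulr1; ring.
  apply: le_lt_trans (pd h _ _) _.
  - by near: h; exact: nbhs_dnbhs_neq.
  - by near: h; exact: dnbhs0_lt.
  by rewrite mulrAC ltr_pdivrMr // ltr_pM2l // ltrDl.
by apply: DeriveDef; [apply/cvg_ex; exists l | exact: cvg_lim dq].
Unshelve. all: by end_near.
Qed.

Lemma line_MVT y w (a : R) : 0 < a ->
  exists2 c, 0 < c < a & V (y + a *: w) - V y = edot (g (y + c *: w)) w * a.
Proof.
move=> a_gt0; have V_line := is_derive_line y w.
have f_cont : {within `[0, a], continuous (fun t => V (y + t *: w))}.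
  by apply: derivable_within_continuous => t _; exact: ex_derive.
have [c] := MVT a_gt0 (fun t _ => V_line t) f_cont.
by rewrite in_itv /= scale0r addr0 subr0; exists c.
Qed.

End Gradient.

Section SufficientDecrease.
Variables (R : realType) (n : nat) (Xi : set 'rV[R]_n) (Psi : 'rV[R]_n -> set 'rV[R]_n).
Variables (V : 'rV[R]_n -> R) (g : 'rV[R]_n -> 'rV[R]_n).

Definition decreases_at (a M : R) : Prop :=
  forall y s y', Xi y -> V y <= M -> Psi y s -> is_proj Xi (y - a *: s) y' ->
    V y' <= V y - a / 2 * edot (g y) s.

Definition sufficient_decrease : Prop :=
  forall M : R, exists2 a0 : R, 0 < a0 & forall a, 0 < a <= a0 -> decreases_at a M.

End SufficientDecrease.

Lemma le_half_decrease (R : realType) (a beta k gs ns v v' : R) :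
  0 < a -> 0 < beta -> 0 <= k -> k * a * beta <= 2^-1 -> 0 <= ns -> ns <= beta * gs ->
  v' <= v - a * gs + k * a ^+ 2 * ns -> v' <= v - a / 2 * gs.
Proof.
move=> a_gt0 beta_gt0 k_ge0 kab ns_ge0 ns_le v'_le.
have gs_ge0 : 0 <= gs by rewrite -(pmulr_rge0 _ beta_gt0) (le_trans ns_ge0).
have : k * a ^+ 2 * ns <= (k * a * beta) * (a * gs).
  rewrite (_ : k * a * beta * (a * gs) = k * a ^+ 2 * (beta * gs)); last by ring.
  by apply: ler_wpM2l => //; rewrite mulr_ge0 ?sqr_ge0.
have : (k * a * beta) * (a * gs) <= 2^-1 * (a * gs).
  by apply: ler_wpM2r; rewrite // mulr_ge0 // ltW.
lra.
Qed.

Lemma le0_of_quadratic_bound (R : realType) (k D : R) : 0 <= D ->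
  (forall t : R, 0 <= t <= 1 -> 2 * t * k <= t ^+ 2 * D) -> k <= 0.
Proof.
move=> D_ge0 kD; rewrite leNgt; apply/negP => k_gt0.
(* test the bound at [t = k / (k + D)] *)
have kD_gt0 : 0 < k + D by lra.
have t_gt0 : 0 < k / (k + D) by rewrite divr_gt0.
have t_le1 : k / (k + D) <= 1 by rewrite ler_pdivrMr // mul1r lerDl.
have tD_le : k / (k + D) * D <= k by rewrite mulrAC ler_pdivrMr //; nra.
have /kD : 0 <= k / (k + D) <= 1 by rewrite t_le1 ltW.
move: t_gt0 tD_le; move: (k / (k + D)) => t; nra.
Qed.

Section ConvexProjection.
Variables (R : realType) (n : nat) (Xi : set 'rV[R]_n).
Hypothesis Xi_convex : is_convex Xi.

Lemma proj_convex_obtuse z p q : is_proj Xi z p -> Xi q -> edot (q - p) (z - p) <= 0.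
Proof.
move=> [Xp p_min] Xq; apply: (le0_of_quadratic_bound (edotxx_ge0 (q - p))) => t t01.
have := p_min _ (Xi_convex Xq Xp t01).
have -> : z - (t *: q + (1 - t) *: p) = - (t *: (q - p) - (z - p)).
  by apply/rowP => i; rewrite !mxE; ring.
rewrite enormN -ler_sqr ?nnegrE ?enorm_ge0 // !enorm_sqr edot_sqrB; lra.
Qed.

Lemma proj_convex_le z p q : is_proj Xi z p -> Xi q -> enorm (p - q) <= enorm (z - q).
Proof.
move=> zp Xq; rewrite -ler_sqr ?nnegrE ?enorm_ge0 // !enorm_sqr.
have := proj_convex_obtuse zp Xq.
have -> : p - q = - (q - p) by rewrite opprB.
have -> : z - q = (z - p) + - (q - p) by rewrite opprB addrA subrK.
move: (z - p) (q - p) => u v; rewrite edot_sqrD edotNl !edotNr opprK (edotC u v).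
have := edotxx_ge0 u; lra.
Qed.

End ConvexProjection.

Section HalfSquaredDistance.
Variables (R : realType) (n : nat) (A : set 'rV[R]_n) (V : 'rV[R]_n -> R).
Hypotheses (A_neq0 : A !=set0) (A_compact : compact A).
Hypothesis V_def : forall y, V y = 2^-1 * dist_to A y ^+ 2.

Lemma rad_unb_half_sqr_dist Xi : rad_unb_on V A Xi.
Proof.
move=> B; exists (`|B| + 1); first by rewrite ltr_wpDl.
move=> x _ /negP; rewrite /nbhd_cl /= -ltNge V_def => Bx.
have := ler_norm B; have := normr_ge0 B; nra.
Qed.

Lemma half_sqr_dist_upper_quadratic g : has_gradient V g ->
  forall z h, V (z + h) <= V z + edot (g z) h + 2^-1 * enorm h ^+ 2.
Proof.
move=> V_grad z; have [p Ap zp] := dist_to_attained A_neq0 z A_compact.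
suff V_le h : V (z + h) <= V z + edot (z - p) h + 2^-1 * enorm h ^+ 2.
  by move=> h; rewrite (gradient_eq_of_upper_quadratic V_grad V_le).
suff : dist_to A (z + h) ^+ 2 <= enorm (z - p) ^+ 2 + 2 * edot (z - p) h + enorm h ^+ 2.
  by rewrite !V_def zp; lra.
have -> : enorm (z - p) ^+ 2 + 2 * edot (z - p) h + enorm h ^+ 2 = enorm (z + h - p) ^+ 2.
  by rewrite !enorm_sqr [z + h - p]addrAC (edot_sqrD (z - p)).
by rewrite ler_sqr ?nnegrE ?dist_to_ge0 ?enorm_ge0 // dist_to_le.
Qed.

Lemma sufficient_decrease_half_sqr_dist Xi Psi g beta :
  has_gradient V g -> is_convex Xi -> A `<=` Xi -> 0 < beta ->
  (forall y s, Xi y -> Psi y s -> enorm s ^+ 2 <= beta * edot (g y) s) ->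
  sufficient_decrease Xi Psi V g.
Proof.
move=> V_grad Xi_convex AXi beta_gt0 Psi_bound M; exists beta^-1; first by rewrite invr_gt0.
move=> a /andP[a_gt0 a_le] y s y' Xy _ Ps y'_proj.
(* [P_Xi] does not increase the distance to [A], since [A] lies in [Xi] *)
have Vy'_le : V y' <= V (y - a *: s).
  rewrite !V_def ler_pM2l ?invr_gt0 // ler_sqr ?nnegrE ?dist_to_ge0 //.
  have [p Ap ->] := dist_to_attained A_neq0 (y - a *: s) A_compact.
  exact: le_trans (dist_to_le _ Ap) (proj_convex_le Xi_convex y'_proj (AXi _ Ap)).
have := half_sqr_dist_upper_quadratic V_grad y (- (a *: s)).
rewrite edotNr edotZr enormN enormZ gtr0_norm // exprMn => Vys.
apply: (le_half_decrease (k := 2^-1) (beta := beta) (ns := enorm s ^+ 2)) => //.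
- by rewrite -mulrA ler_piMr // -(mulVf (lt0r_neq0 beta_gt0)) ler_wpM2r // ltW.
- exact: sqr_ge0.
- exact: Psi_bound.
- by apply: le_trans Vy'_le _; rewrite mulrA in Vys.
Qed.

End HalfSquaredDistance.

Section RadiallyUnbounded.
Variables (R : realType) (n : nat) (A Xi : set 'rV[R]_n) (V : 'rV[R]_n -> R).
Hypothesis V_rad : rad_unb_on V A Xi.

Lemma sublevel_sub_nbhd_cl M :
  exists2 r : R, 0 < r & forall x, Xi x -> V x <= M -> nbhd_cl A r x.
Proof.
have [r r_gt0 Vr] := V_rad M; exists r => // x Xx VM.
by apply: contrapT => /(Vr x Xx); rewrite ltNge VM.
Qed.

Lemma compact_sublevel M : A !=set0 -> compact A -> closed Xi -> continuous V ->
  compact (Xi `&` [set x | V x <= M]).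
Proof.
move=> A_neq0 A_compact Xi_closed V_cont; have [r _ Vr] := sublevel_sub_nbhd_cl M.
apply: (compact_sub_nbhd_cl A_neq0 A_compact) => [x [Xx VM]|]; first exact: Vr.
exact: closedI Xi_closed (closed_sublevel V_cont).
Qed.

End RadiallyUnbounded.

Section LipschitzGradient.
Variables (R : realType) (n : nat).
Local Notation vec := 'rV[R]_n.

Lemma is_proj_setT (z p : vec) : is_proj setT z p -> p = z.
Proof.
move=> [_ /(_ z I)]; rewrite subrr enorm0 => zp.
by apply/esym/subr0_eq/enorm_eq0/le_anti; rewrite zp enorm_ge0.
Qed.

Lemma compact_uniform_lipschitz (g : vec -> vec) (K : set vec) :
  locally_lipschitz g -> compact K ->
  exists2 r : R, 0 < r & exists2 L : R, 0 <= L &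
    forall y z, K y -> enorm (z - y) < r -> enorm (g z - g y) <= L * enorm (z - y).
Proof.
move=> g_lip K_compact.
pose P (i : R) x := forall z1 z2, enorm (z1 - x) < i^-1 -> enorm (z2 - x) < i^-1 ->
  enorm (g z1 - g z2) <= i * enorm (z1 - z2).
(* a finite subcover gives one constant [i] serving both as Lipschitz constant
   and as inverse radius *)
have : \forall i \near +oo, K `<=` P i.
  apply: ((compact_near_coveringP K).1 K_compact R _ P) => x Kx.
  have [rx rx_gt0 [Lx gx]] := g_lip x.
  near=> x' i => z1 z2 z1x' z2x'.
  have i_gt0 : 0 < i by near: i; apply: nbhs_pinfty_gt; exact: num_real.
  have Lx_le : Lx <= i by near: i; apply: nbhs_pinfty_ge; exact: num_real.
  have i_gt : 2 / rx < i by near: i; apply: nbhs_pinfty_gt; exact: num_real.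
  have x'x : enorm (x' - x) < rx / 2.
    by near: x'; apply: nbhs_enorm_lt; rewrite divr_gt0.
  have i_lt : i^-1 < rx / 2.
    by move: i_gt; rewrite ltr_pdivrMr // -[i^-1]mul1r ltr_pdivrMr //; nra.
  have := enorm_triangle z1 x' x; have := enorm_triangle z2 x' x => z2x z1x.
  apply: le_trans (gx z1 z2 _ _) _; [lra | lra | by rewrite ler_wpM2r ?enorm_ge0].
move=> /(filterI (nbhs_pinfty_gt (num_real (0 : R))))/filter_ex[i [i_gt0 KP]].
exists i^-1; first by rewrite invr_gt0.
exists i => [|y z Ky zy]; first exact: ltW.
by apply: (KP y); rewrite // subrr enorm0 invr_gt0.
Unshelve. all: by end_near.
Qed.

Variables (V : vec -> R) (g : vec -> vec).
Hypothesis V_grad : has_gradient V g.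

Lemma lipschitz_segment_decrease y s (a L : R) : 0 < a -> 0 <= L ->
  (forall c, 0 < c < a -> enorm (g (y - c *: s) - g y) <= L * (c * enorm s)) ->
  V (y - a *: s) <= V y - a * edot (g y) s + L * a ^+ 2 * enorm s ^+ 2.
Proof.
move=> a_gt0 L_ge0 g_lip.
have [c /andP[c_gt0 c_lt] ] := line_MVT V_grad y (- s) a_gt0.
rewrite !scalerN edotNr => V_eq.
have g_c : enorm (g (y - c *: s) - g y) <= L * (a * enorm s).
  apply: le_trans (g_lip c _) _; first by rewrite c_gt0 c_lt.
  by rewrite ler_wpM2l // ler_wpM2r ?enorm_ge0 // ltW.
have gc : edot (g y - g (y - c *: s)) s <= L * a * enorm s ^+ 2.
  apply: le_trans (edot_le_enorm _ _) _.
  have -> : L * a * enorm s ^+ 2 = L * (a * enorm s) * enorm s by ring.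
  by rewrite enormBC ler_wpM2r ?enorm_ge0.
have := ler_wpM2l (ltW a_gt0) gc; rewrite edotBl.
move: V_eq; move: (edot (g y) s) (edot (g (y - c *: s)) s) => gy gz; nra.
Qed.

Lemma sufficient_decrease_lipschitz_gradient (A : set vec) Psi beta :
  A !=set0 -> compact A -> continuous g -> locally_lipschitz g ->
  rad_unb_on V A setT -> 0 < beta ->
  (forall y s, setT y -> Psi y s -> enorm s ^+ 2 <= beta * edot (g y) s) ->
  sufficient_decrease setT Psi V g.
Proof.
move=> A_neq0 A_compact g_cont g_lip V_rad beta_gt0 Psi_bound M.
have K_compact : compact [set y | V y <= M].
  rewrite -[X in compact X]setTI.
  exact: compact_sublevel V_rad M A_neq0 A_compact closedT (has_gradient_continuous V_grad).
have [G G_ge0 gG] := compact_continuous_ub K_compact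
  (fun x => continuous_comp (g_cont x) (@continuous_enormB R n 0 (g x))).
have [r r_gt0 [L L_ge0 g_lipK]] := compact_uniform_lipschitz g_lip K_compact.
have betaG_gt0 : 0 < beta * G + 1 by rewrite ltr_wpDl ?mulr_ge0 // ltW.
have betaL_gt0 : 0 < beta * (L + 1) by rewrite mulr_gt0 // ltr_wpDl.
(* [a0] keeps the segment [y, y - a s] in the Lipschitz ball and makes [L a beta <= 1/2] *)
exists (Num.min (r / (beta * G + 1)) (2^-1 / (beta * (L + 1)))).
  by rewrite lt_min !divr_gt0.
move=> a /andP[a_gt0]; rewrite le_min ler_pdivlMr // ler_pdivlMr // => /andP[ar aL].
move=> y s y' _ Vy Ps /is_proj_setT ->.
have s_le : enorm s <= beta * G.
  apply: le_trans (enorm_le_of_sqr_le_edot (ltW beta_gt0) (Psi_bound y s I Ps)) _.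
  apply: ler_wpM2l; first exact: ltW.
  by move: (gG y Vy); rewrite /= subr0.
apply: (le_half_decrease (k := L) (beta := beta) (ns := enorm s ^+ 2)) => //.
- by move: aL; rewrite -mulrA [a * _]mulrC; nra.
- exact: sqr_ge0.
- exact: Psi_bound.
apply: lipschitz_segment_decrease => // c /andP[c_gt0 c_lt].
have cs : enorm (y - c *: s - y) = c * enorm s.
  by rewrite addrAC subrr add0r enormN enormZ gtr0_norm.
rewrite -cs; apply: g_lipK => //; rewrite cs.
have := enorm_ge0 s; nra.
Qed.

End LipschitzGradient.

Lemma descent_enters_sublevel (R : realType) (v : nat -> R) (M1 M2 c : R) :
  0 < c -> (forall t, 0 <= v t) -> v 0%N <= M2 ->
  (forall t, v t <= M1 -> v t.+1 <= M1) ->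
  (forall t, M1 < v t <= M2 -> v t.+1 <= v t - c) ->
  forall t, ((Num.truncn (M2 / c)).+1 <= t)%N -> v t <= M1.
Proof.
move=> c_gt0 v_ge0 v0 v_stay v_drop.
have v_bound t : v t <= M1 \/ v t <= M2 - t%:R * c.
  elim: t => [|t IH]; first by right; rewrite mul0r subr0.
  have [vM1|vM1] := leP (v t) M1; first by left; exact: v_stay.
  have tc_ge0 : 0 <= t%:R * c by rewrite mulr_ge0 // ltW.
  case: IH => IH; first lra.
  have /v_drop : M1 < v t <= M2 by rewrite vM1 /=; lra.
  by rewrite -natr1 mulrDl mul1r => v_next; right; lra.
move=> t tT; case: (v_bound t) => // vt; exfalso.
have : M2 < t%:R * c.
  rewrite -ltr_pdivrMr //; apply: lt_le_trans (truncnS_gt _) _.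
  by rewrite ler_nat.
have := v_ge0 t; lra.
Qed.

Section Convergence.
Variables (R : realType) (n : nat) (A Xi : set 'rV[R]_n) (Psi : 'rV[R]_n -> set 'rV[R]_n).
Variables (V : 'rV[R]_n -> R) (g : 'rV[R]_n -> 'rV[R]_n).
Hypotheses (A_neq0 : A !=set0) (A_compact : compact A) (Xi_closed : closed Xi).
Hypotheses (V_ge0 : forall y, 0 <= V y) (V_cont : continuous V) (V_rad : rad_unb_on V A Xi).
Hypothesis V_decrease : sufficient_decrease Xi Psi V g.
Hypothesis Psi_descent : forall y s, Xi y -> Psi y s -> 0 <= edot (g y) s.

Lemma trajectory_in_Xi a y : trajectory Xi Psi a y -> forall t, Xi (y t).
Proof. by move=> [Xy0 [s ys]] [|t] //; have [_ []] := ys t. Qed.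

Lemma trajectory_decrease a M y : decreases_at Xi Psi V g a M -> trajectory Xi Psi a y ->
  exists s, forall t, Psi (y t) (s t) /\
    (V (y t) <= M -> V (y t.+1) <= V (y t) - a / 2 * edot (g (y t)) (s t)).
Proof.
move=> dec traj; have Xy := trajectory_in_Xi traj; case: traj => _ [s ys]; exists s => t.
by have [Ps proj] := ys t; split => // Vy; exact: dec (Xy t) Vy Ps proj.
Qed.

Lemma trajectory_nonincreasing a M y : 0 < a -> decreases_at Xi Psi V g a M ->
  trajectory Xi Psi a y -> forall t, V (y t) <= M -> V (y t.+1) <= V (y t).
Proof.
move=> a_gt0 dec traj t Vy; have [s ys] := trajectory_decrease dec traj.
have [Ps /(_ Vy) Vy_dec] := ys t.
have := mulr_ge0 (divr_ge0 (ltW a_gt0) (ler0n R 2)) (Psi_descent (trajectory_in_Xi traj t) Ps).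
lra.
Qed.

Lemma compact_nbhd_clI r : compact (nbhd_cl A r `&` Xi).
Proof.
apply: (compact_sub_nbhd_cl (r := r) A_neq0 A_compact); first by move=> x [].
by apply: closedI => //; exact: closed_nbhd_cl.
Qed.

Lemma practically_stable_of_decrease : practically_stable Xi Psi A.
Proof.
have [M _ VM] := compact_continuous_ub (compact_nbhd_clI (r := 1)) V_cont.
have [r r_gt0 Vr] := sublevel_sub_nbhd_cl V_rad M.
exists r => // rho r_lt; exists 1 => //; have [a0 a0_gt0 dec] := V_decrease M.
exists [set a | 0 < a <= a0]; split; first by exists a0; rewrite /= a0_gt0 lexx.
split=> [a /andP[] // | a y a_range traj y0 t].
have Xy := trajectory_in_Xi traj; split => //.
have Vy : V (y t) <= M.
  have [a_gt0 _] := andP a_range.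
  elim: t => [|t IH]; first exact: VM.
  exact: le_trans (trajectory_nonincreasing a_gt0 (dec a a_range) traj IH) IH.
by have := Vr _ (Xy t) Vy; rewrite /nbhd_cl /=; lra.
Qed.

Lemma SPSP_edot_lb : SPSP Psi g A Xi -> exists2 eps : R, 0 <= eps &
  forall r M : R, eps < r -> exists2 m : R, 0 < m &
    forall y s, Xi y -> r <= dist_to A y -> V y <= M -> Psi y s -> m <= edot (g y) s.
Proof.
move=> [_ [eps [_ [eps_ge0 [_ [_ Psi_phi]]]]]]; exists eps => // r M eps_lt.
have [r' r'_gt0 Vr'] := sublevel_sub_nbhd_cl V_rad M.
have [phi [phi_cont [phi_gt0 [_ phi_le]]]] := Psi_phi (r + r') ltac:(lra).
set K := Xi `&` [set y | V y <= M] `&` [set y | r <= dist_to A y].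
have K_phi y : K y -> [/\ Xi y, nbhd_cl A (r + r') y & ~ nbhd_op A eps y].
  move=> [[Xy /= Vy] /= yA]; split => //; last by rewrite /nbhd_op /= => ?; lra.
  by have := Vr' y Xy Vy; rewrite /nbhd_cl /=; have := dist_to_ge0 A_neq0 y; lra.
have [m m_gt0 phi_m] : exists2 m, 0 < m & forall y, K y -> m <= phi y.
  apply: compact_continuous_pos_lb => [|//|y /K_phi[]]; last exact: phi_gt0.
  apply: compact_closedI (closed_superlevel (continuous_dist_to A_neq0)).
  exact: compact_sublevel V_rad M A_neq0 A_compact Xi_closed V_cont.
exists m => // y s Xy yA Vy Ps; have Ky : K y by [].
by have [_ y_in y_out] := K_phi y Ky; exact: le_trans (phi_m y Ky) (phi_le y s Xy y_in y_out Ps).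
Qed.

Lemma semiglobally_practically_attractive_of_decrease :
  SPSP Psi g A Xi -> semiglobally_practically_attractive Xi Psi A.
Proof.
move=> /SPSP_edot_lb[eps eps_ge0 edot_lb].
have [M1 _ VM1] := compact_continuous_ub (compact_nbhd_clI (r := eps + 1)) V_cont.
have [r1 r1_gt0 Vr1] := sublevel_sub_nbhd_cl V_rad M1.
exists r1 => // sigma rho r1_lt rho_lt.
have [M' _ VM'] := compact_continuous_ub (compact_nbhd_clI (r := sigma)) V_cont.
set M2 := Num.max M1 M'; have M12 : M1 <= M2 by rewrite le_max lexx.
have [m m_gt0 gs_m] := edot_lb (eps + 1) M2 ltac:(lra).
have [a0 a0_gt0 dec] := V_decrease M2.
exists [set a | 0 < a <= a0]; split; first by exists a0; rewrite /= a0_gt0 lexx.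
split=> [a /andP[] // | a a_range e e_gt0 _]; have [a_gt0 _] := andP a_range.
have am_gt0 : 0 < a / 2 * m by rewrite !mulr_gt0.
exists (Num.truncn (M2 / (a / 2 * m))).+1 => y traj y0 t tT.
have Xy := trajectory_in_Xi traj; have [s ys] := trajectory_decrease (dec a a_range) traj.
have : V (y t) <= M1.
  apply: (descent_enters_sublevel am_gt0 (fun t => V_ge0 (y t))) tT.
  - by apply: le_trans (VM' _ (conj y0 (Xy 0%N))) _; rewrite le_max lexx orbT.
  - move=> u Vu; have := trajectory_nonincreasing a_gt0 (dec a a_range) traj (le_trans Vu M12).
    by move/le_trans; apply.
  move=> u /andP[M1_lt Vu]; have [Ps /(_ Vu) Vu_dec] := ys u.
  (* by the choice of [M1], an iterate with [V > M1] lies outside [B_(eps+1)(A)] *)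
  have yA : eps + 1 <= dist_to A (y u).
    rewrite leNgt; apply/negP => /ltW yA.
    by have := VM1 _ (conj yA (Xy u)); lra.
  have := gs_m _ _ (Xy u) yA Vu Ps.
  by rewrite -(ler_pM2l (divr_gt0 a_gt0 (ltr0Sn R 1))); lra.
move=> /(Vr1 _ (Xy t)) yt_in; apply: le_trans (dist_to_mem _) (ltW e_gt0).
by rewrite /nbhd_cl /= in yt_in *; lra.
Qed.

Lemma SPAS_of_sufficient_decrease : SPSP Psi g A Xi -> SPAS Xi Psi A.
Proof.
move=> Psi_spsp; split; first exact: practically_stable_of_decrease.
exact: semiglobally_practically_attractive_of_decrease.
Qed.

End Convergence.

Theorem theorem1 (R : realType) (n : nat) (A Xi : set 'rV[R]_n)
  (V : 'rV[R]_n -> R) (g : 'rV[R]_n -> 'rV[R]_n)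
  (Psi : 'rV[R]_n -> set 'rV[R]_n) :
  A !=set0 -> compact A ->
  (forall y, 0 <= V y) ->
  has_gradient V g ->
  ( (Xi !=set0 /\ closed Xi /\ is_convex Xi /\ is_convex A /\
       (forall y, V y = 2^-1 * dist_to A y ^+ 2))
    \/
    (Xi = setT /\ continuous g /\ locally_lipschitz g /\
       pos_def_wrt V A /\ rad_unb_on V A setT) ) ->
  SPSP Psi g A Xi ->
  (exists2 beta : R, 0 < beta &
     forall y s, Xi y -> Psi y s -> enorm s ^+ 2 <= beta * edot (g y) s) ->
  SPAS Xi Psi A.
Proof.
move=> A_neq0 A_compact V_ge0 V_grad setting Psi_spsp [beta beta_gt0 Psi_bound].
have V_cont := has_gradient_continuous V_grad.
have Psi_descent y s : Xi y -> Psi y s -> 0 <= edot (g y) s.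
  by move=> Xy /(Psi_bound y s Xy); exact: edot_ge0_of_enorm_sqr_le.
case: setting => [[_ [Xi_closed [Xi_convex [_ V_def]]]] | [Xi_T [g_cont [g_lip [_ V_rad]]]]].
- have AXi : A `<=` Xi by move=> a /Psi_spsp.1[r r_gt0]; apply; rewrite subrr enorm0.
  have V_dec := sufficient_decrease_half_sqr_dist A_neq0 A_compact V_def V_grad
    Xi_convex AXi beta_gt0 Psi_bound.
  exact: (SPAS_of_sufficient_decrease A_neq0 A_compact Xi_closed V_ge0 V_cont
    (rad_unb_half_sqr_dist V_def Xi) V_dec Psi_descent Psi_spsp).
- subst Xi; have V_dec := sufficient_decrease_lipschitz_gradient V_grad A_neq0 A_compact
    g_cont g_lip V_rad beta_gt0 Psi_bound.
  exact: (SPAS_of_sufficient_decrease A_neq0 A_compact closedT V_ge0 V_cont V_rad V_dec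
    Psi_descent Psi_spsp).
Qed.
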